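(* Let $(G,c)\in P_m$ with $G$ connected, and choose a face $f$ of $G$ to be the outer face (so $G$ is viewed as a plane graph). Let $B$ and $W$ denote respectively the number of black and white faces of $G$ other than $f$. Then: - if $f$ is white, $B-W\le \lfloor \frac{m-1}{2}\rfloor$; - if $f$ is black, $B-W\le \lfloor \frac{m-5}{2}\rfloor$.
   Context: $P_m$ is the set of pairs $(G,c)$ where $G$ is a simple graph on $m$ vertices with no isolated vertices, embedded in the $2$-sphere, and $c$ is a coloring of the faces of $G$ in black and white such that every edge bounds exactly one white face and exactly one black face. *)

(* Graphs embedded in the 2-sphere are encoded
   combinatorially as (connected) combinatorial maps of genus 0. *)
From HB Require Import structures.
From mathcomp Require Import all_boot all_order all_algebra all_fingroup.
Set Implicit Arguments. Unset Strict Implicit. Unset Printing Implicit Defensive.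

Section Maps.
Variable D : finType.   (* darts = half-edges *)

Definition edge_involution (a : {perm D}) : Prop :=
  forall d, a (a d) = d /\ a d != d.

(* vertices = orbits of the rotation s, edges = orbits of a,
   faces = orbits of the face permutation phi d = s (a d) *)
Definition face_perm (s a : {perm D}) : D -> D := fun d => s (a d).

Definition nverts (s : {perm D}) : nat := fcard s D.
Definition nedges (a : {perm D}) : nat := fcard a D.
Definition nfaces (s a : {perm D}) : nat := fcard (face_perm s a) D.

Definition map_connected (s a : {perm D}) : Prop :=
  forall x y, connect [rel u v | (v == s u) || (v == a u)] x y.

(* embedded in the sphere: Euler characteristic 2 *)
Definition genus0 (s a : {perm D}) : Prop :=
  nverts s + nfaces s a = nedges a + 2.

(* simple graph: no loops, no multiple edges *)
Definition simple_map (s a : {perm D}) : Prop :=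
  (forall d, ~~ fconnect s d (a d)) /\
  (forall d e, fconnect s d e -> fconnect s (a d) (a e) -> d = e).

(* c d = true : the face containing dart d is black; false : white.
   c is constant on faces, and the two sides of each edge get
   different colours (each edge bounds exactly one white and one black face). *)
Definition face_colouring (s a : {perm D}) (c : D -> bool) : Prop :=
  (forall d, c (face_perm s a d) = c d) /\ (forall d, c (a d) != c d).

(* number of black / white faces other than the outer face (face of d0) *)
Definition nblack_inner (s a : {perm D}) (c : D -> bool) (d0 : D) : nat :=
  fcard (face_perm s a) [pred d | c d && ~~ fconnect (face_perm s a) d0 d].
Definition nwhite_inner (s a : {perm D}) (c : D -> bool) (d0 : D) : nat :=
  fcard (face_perm s a) [pred d | ~~ c d && ~~ fconnect (face_perm s a) d0 d].

End Maps.

(* floor((n - k)/2) as an integer (intdiv's %/ floors for positive divisors) *)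
Definition floor_half_sub (n k : nat) : int := ((n%:Z - k%:Z) %/ 2)%Z.

(* A face of length one or two in a simple map would run around a pendant edge, which would
   then have the same face on both sides; so in a face-2-coloured simple map every face has
   at least three darts.  Each edge carries exactly one black dart, hence 3 B <= E for the
   number B of black faces, and Euler's formula V + B + W = E + 2 gives B - W <= V - 2 - B.
   Adding B - W <= B - 1 (there is a white face) yields 2 (B - W) <= V - 3.  Discounting the
   outer face changes B - W by +1 if it is white and by -1 if it is black. *)
From HB Require Import structures.
From mathcomp Require Import all_boot all_order all_algebra all_fingroup.
From mathcomp Require Import zify.
Set Implicit Arguments. Unset Strict Implicit. Unset Printing Implicit Defensive.

Section OrbitCounting.
Variables (T : finType) (f : T -> T).
Hypothesis injf : injective f.

Lemma fcard_order_ge n (A : {pred T}) :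
  fclosed f A -> {in A, forall x, n <= fingraph.order f x} -> fcard f A * n <= #|A|.
Proof.
move=> clA A_n; have symf := fconnect_sym injf.
rewrite -sum1_card (partition_big (froot f) [predI froots f & A]) /=; last first.
  by move=> x Ax; rewrite inE /= roots_root // -(closed_connect clA (connect_root _ x)).
rewrite -sum_nat_const; apply: leq_sum => r /andP[/eqP r_root Ar].
rewrite sum1_card; apply: leq_trans (A_n r Ar) (subset_leq_card _).
apply/subsetP => x r_x; rewrite unfold_in /= -(closed_connect clA r_x) [r \in A]Ar.
by move: r_x; rewrite unfold_in => /(fingraph.rootP symf) <-; apply/eqP.
Qed.

Lemma fcard_predD_orbit (A : {pred T}) x0 :
  fclosed f A ->
  fcard f [pred x | (x \in A) && ~~ fconnect f x0 x] + (x0 \in A) = fcard f A.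
Proof.
move=> clA; have symf := fconnect_sym injf.
have orbit_x0 : fcard f [pred x | (x \in A) && fconnect f x0 x] = (x0 \in A).
  have [Ax0 | nAx0] /= := boolP (x0 \in A).
    rewrite -(n_comp_connect symf x0); apply: eq_n_comp_r => x; rewrite !inE.
    by apply/andb_idl => /(closed_connect clA) <-.
  apply: eq_card0 => x; rewrite !inE; apply/negP => /and3P[_ Ax /(closed_connect clA)].
  by rewrite Ax (negbTE nAx0).
rewrite -orbit_x0 /n_comp_mem addnC -(cardID (fconnect f x0) (predI (froots f) (mem A))).
by congr (_ + _); apply: eq_card => x; rewrite !inE /= !unfold_in /=;
  case: (froots f x); case: (A x); case: (fconnect f x0 x).
Qed.

End OrbitCounting.

Section FaceColouredMap.
Variables (D : finType) (s a : {perm D}) (c : D -> bool).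
Hypotheses (a_inv : edge_involution a) (simple : simple_map s a)
  (col : face_colouring s a c).
Local Notation phi := (face_perm s a).

Lemma face_perm_inj : injective phi.
Proof. by move=> x y /perm_inj/perm_inj. Qed.

Lemma black_fclosed : fclosed phi [pred d | c d].
Proof. by move=> x y /eqP <-; rewrite /= /in_mem /= col.1. Qed.

Lemma white_fclosed : fclosed phi [pred d | ~~ c d].
Proof. exact: predC_closed black_fclosed. Qed.

Lemma face_perm2_neq d : phi (phi d) != d.
Proof.
apply/eqP => phi2d; have [aaK _] := a_inv d.
(* simplicity makes [a d] a vertex of degree one *)
have s_ad : s (a d) = a d.
  symmetry; apply: simple.2; first exact/connect1/eqP.
  rewrite aaK (fconnect_sym (@perm_inj _ s)); exact/connect1/eqP/esym.
have := col.1 (a (a d)); rewrite /face_perm aaK s_ad => c_ad.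
by have := col.2 d; rewrite c_ad eqxx.
Qed.

Lemma face_order_gt2 d : 2 < fingraph.order phi d.
Proof.
have := iter_order face_perm_inj d; have := fingraph.order_gt0 phi d.
case: (fingraph.order phi d) => [|[|[|n]]] // _ /= phid.
  by have := face_perm2_neq d; rewrite !phid eqxx.
by have := face_perm2_neq d; rewrite phid eqxx.
Qed.

Lemma card_darts : #|D| = nedges a * 2.
Proof.
symmetry; apply: (fcard_order_set (@perm_inj _ a)) => //.
apply/subsetP => d _; rewrite inE; apply/eqP.
have [aaK ad_neq] := a_inv d.
apply: (@order_cycle _ _ [:: d; a d]); rewrite ?mem_head //=.
  by rewrite aaK !eqxx.
by rewrite mem_seq1 eq_sym andbT.
Qed.

Lemma card_black_darts : #|[pred d | c d]| = nedges a.
Proof.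
have black_white : #|[pred d | c d]| = #|[pred d | ~~ c d]|.
  rewrite -(card_image (@perm_inj _ a)); apply: eq_card => d.
  rewrite -{1}(a_inv d).1 (mem_image (@perm_inj _ a)) !inE.
  by move: (col.2 d); case: (c d); case: (c (a d)).
apply/eqP; rewrite -(eqn_pmul2r (isT : 0 < 2)) -card_darts -(cardC [pred d | c d]).
by rewrite black_white mulnS muln1.
Qed.

Lemma nblack_faces_mul3_le : fcard phi [pred d | c d] * 3 <= nedges a.
Proof.
rewrite -card_black_darts; apply: (fcard_order_ge face_perm_inj black_fclosed).
by move=> d _; apply: face_order_gt2.
Qed.

Lemma nwhite_faces_gt0 (d : D) : 0 < fcard phi [pred d | ~~ c d].
Proof.
apply/(fcard_gt0P face_perm_inj white_fclosed).
by case c_d: (c d); [exists (a d); move: (col.2 d) | exists d]; rewrite inE c_d /= ?eqb_id.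
Qed.

Lemma nblack_inner_outer (d0 : D) :
  nblack_inner s a c d0 + c d0 = fcard phi [pred d | c d].
Proof. exact (fcard_predD_orbit face_perm_inj d0 black_fclosed). Qed.

Lemma nwhite_inner_outer (d0 : D) :
  nwhite_inner s a c d0 + ~~ c d0 = fcard phi [pred d | ~~ c d].
Proof. exact (fcard_predD_orbit face_perm_inj d0 white_fclosed). Qed.

End FaceColouredMap.

Theorem lemma2p4 (D : finType) (s a : {perm D}) (c : D -> bool) (m : nat) (d0 : D) :
  edge_involution a -> map_connected s a -> genus0 s a -> simple_map s a ->
  nverts s = m -> face_colouring s a c ->
  (c d0 = false ->
     ((nblack_inner s a c d0)%:Z - (nwhite_inner s a c d0)%:Z <= floor_half_sub m 1)%R) /\
  (c d0 = true ->
     ((nblack_inner s a c d0)%:Z - (nwhite_inner s a c d0)%:Z <= floor_half_sub m 5)%R).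
Proof.
move=> a_inv _ euler simple <- col.
have black3 := nblack_faces_mul3_le a_inv simple col.
have white_pos := nwhite_faces_gt0 col d0.
rewrite /genus0 /nfaces (n_compC [pred d | c d]) in euler.
rewrite -(nblack_inner_outer col d0) in black3 euler.
rewrite -(nwhite_inner_outer col d0) in white_pos euler.
rewrite /floor_half_sub; split => c_d0; rewrite lez_divRL //.
all: rewrite c_d0 /= in black3 white_pos euler; lia.
Qed.
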